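(* Let $k$ be a field of characteristic zero and $R$ an integral domain that is a $k$-algebra, endowed with a nonzero $k$-linear derivation $\delta$. Then there is a Poisson bracket $\{-,-\}$ on the polynomial ring $R[t]$ such that (1) the Poisson centre $\{z\in\operatorname{Frac}(R[t]):\{z,-\}\equiv0\}$ of $\operatorname{Frac}(R[t])$ equals the field of constants $\{f\in\operatorname{Frac}(R):\delta(f)=0\}$ of $(\operatorname{Frac}(R),\delta)$; and (2) if $P$ is a prime differential ideal of $R$ (i.e. $\delta(P)\subseteq P$), then $PR[t]$ is a Poisson prime ideal of $R[t]$.
   Context: A Poisson bracket on a commutative $k$-algebra is a $k$-bilinear Lie bracket such that $\{-,x\}$ is a derivation for each $x$; it extends uniquely to the fraction field. A Poisson prime ideal is a prime ideal $Q$ with $\{Q,R[t]\}\subseteq Q$. $\delta$ is extended to $\operatorname{Frac}(R)$ by the quotient rule. *)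

From HB Require Import structures.
From mathcomp Require Import all_boot all_order all_algebra.
From mathcomp Require Import fraction.
Set Implicit Arguments. Unset Strict Implicit. Unset Printing Implicit Defensive.
Import Order.TTheory GRing.Theory Num.Theory.
Local Open Scope ring_scope.

(* A k-algebra structure on a commutative ring A is given by the structure
   map s : k -> A (a ring morphism); scalar multiplication c.x is s c * x. *)

Definition poisson_bracket (k : fieldType) (A : comNzRingType) (s : k -> A)
    (B : A -> A -> A) : Prop :=
  [/\ (forall c x y z, B (s c * x + y) z = s c * B x z + B y z),
      (forall c x y z, B x (s c * y + z) = s c * B x y + B x z),
      (forall x, B x x = 0),
      (forall x y z, B x (B y z) + B y (B z x) + B z (B x y) = 0) &
      (forall x y z, B (y * z) x = y * B z x + z * B y x)].

Definition klin_derivation (k : fieldType) (A : comNzRingType) (s : k -> A)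
    (d : A -> A) : Prop :=
  (forall c x y, d (s c * x + y) = s c * d x + d y) /\
  (forall x y, d (x * y) = x * d y + y * d x).

Definition derivation (A : comNzRingType) (d : A -> A) : Prop :=
  (forall x y, d (x + y) = d x + d y) /\
  (forall x y, d (x * y) = x * d y + y * d x).

Definition prime_ideal (A : comNzRingType) (P : A -> Prop) : Prop :=
  [/\ P 0, (forall x y, P x -> P y -> P (x + y)),
      (forall a x, P x -> P (a * x)), ~ P 1 &
      (forall x y, P (x * y) -> P x \/ P y)].

Definition ext_ideal (R : idomainType) (P : R -> Prop) (f : {poly R}) : Prop :=
  exists s : seq ({poly R} * R),
    (forall u, u \in s -> P u.2) /\ f = \sum_(u <- s) u.1 * (u.2)%:P.

Definition poisson_prime_ideal (A : comNzRingType) (B : A -> A -> A)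
    (Q : A -> Prop) : Prop :=
  prime_ideal Q /\ (forall q a, Q q -> Q (B q a)).

Notation "x %:F" := (@FracField.tofrac _ x) : ring_scope.

From HB Require Import structures.
From mathcomp Require Import all_boot all_order all_algebra.
From mathcomp Require Import fraction generic_quotient ring zify.
From Stdlib Require Import Classical.
Import Order.TTheory GRing.Theory Num.Theory.
Local Open Scope ring_scope.
Set Implicit Arguments. Unset Strict Implicit.

(* The bracket is {p, q} = p' D(q) - D(p) q', where ' = d/dt and D applies
   delta to the coefficients: the Jacobian bracket of two commuting derivations
   killing k, hence Poisson, and it extends to Frac(R[t]) through the
   quotient-rule extensions of both derivations.  Since {-, w} is a derivation,
   p/q is central iff q {p, u} = p {q, u} for all polynomials u.  Taking u = c
   with delta c <> 0 gives the Wronskian relation q p' = p q', which in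
   characteristic zero forces p/q = a/b with a, b in R; taking u = t then gives
   b delta(a) = a delta(b).  Conversely such a ratio is central because
   {a, u} = - delta(a) u' for a in R.  For (2), P R[t] is the set of polynomials
   with all coefficients in P: it is prime by a Gauss-lemma argument and stable
   under both derivations when delta(P) is contained in P. *)

Section Derivation.
Variables (A : comNzRingType) (d : A -> A).
Hypothesis hd : derivation d.

Lemma derivationD x y : d (x + y) = d x + d y. Proof. by case: hd. Qed.
Lemma derivationM x y : d (x * y) = x * d y + y * d x. Proof. by case: hd. Qed.

Lemma derivation0 : d 0 = 0.
Proof. by apply: (@addrI _ (d 0)); rewrite -derivationD !addr0. Qed.

Lemma derivation1 : d 1 = 0.
Proof.
have d11 := derivationM 1 1; rewrite mulr1 mul1r in d11.
by apply: (@addrI _ (d 1)); rewrite -d11 addr0.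
Qed.

Lemma derivationN x : d (- x) = - d x.
Proof. by apply: (@addrI _ (d x)); rewrite -derivationD !subrr derivation0. Qed.

Lemma derivationB x y : d (x - y) = d x - d y.
Proof. by rewrite derivationD derivationN. Qed.

Lemma derivationMn x n : d (x *+ n) = d x *+ n.
Proof.
elim: n => [|n IHn]; first by rewrite !mulr0n derivation0.
by rewrite !mulrS derivationD IHn.
Qed.

Lemma derivation_sum (I : Type) (r : seq I) (F : I -> A) :
  d (\sum_(i <- r) F i) = \sum_(i <- r) d (F i).
Proof.
elim: r => [|x r IHr]; first by rewrite !big_nil derivation0.
by rewrite !big_cons derivationD IHr.
Qed.

End Derivation.

Lemma derivation_quot (K : fieldType) (D : K -> K) :
  derivation D -> forall a b, b != 0 -> D (a / b) = (D a * b - a * D b) / b ^+ 2.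
Proof.
move=> hD a b b_neq0; have {2}-> : a = a / b * b by rewrite divfK.
by rewrite [in RHS](derivationM hD); field.
Qed.

Local Ltac expand_derivations h1 h2 :=
  rewrite ?(derivationB h1, derivationB h2, derivationD h1, derivationD h2,
            derivationN h1, derivationN h2, derivationM h1, derivationM h2).

Lemma derivation_commutator (A : comNzRingType) (D1 D2 : A -> A) :
  derivation D1 -> derivation D2 -> derivation (fun x => D1 (D2 x) - D2 (D1 x)).
Proof. by move=> h1 h2; split=> x y /=; expand_derivations h1 h2; ring. Qed.

Definition der_bracket (A : comNzRingType) (D1 D2 : A -> A) (x y : A) :=
  D1 x * D2 y - D2 x * D1 y.

Lemma poisson_der_bracket (k : fieldType) (A : comNzRingType) (s : k -> A)
    (D1 D2 : A -> A) :
  derivation D1 -> derivation D2 -> (forall x, D1 (D2 x) = D2 (D1 x)) ->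
  (forall c, D1 (s c) = 0) -> (forall c, D2 (s c) = 0) ->
  poisson_bracket s (der_bracket D1 D2).
Proof.
move=> h1 h2 D12 D1s D2s; rewrite /der_bracket; split.
- by move=> c x y z; expand_derivations h1 h2; rewrite D1s D2s; ring.
- by move=> c x y z; expand_derivations h1 h2; rewrite D1s D2s; ring.
- by move=> x; rewrite mulrC subrr.
- by move=> x y z; expand_derivations h1 h2; rewrite !D12; ring.
- by move=> x y z; expand_derivations h1 h2; ring.
Qed.

Section PoissonBracket.
Variables (k : fieldType) (A : comNzRingType) (s : k -> A) (B : A -> A -> A).
Hypotheses (s1 : s 1 = 1) (hB : poisson_bracket s B).

Lemma poisson_addl x y z : B (x + y) z = B x z + B y z.
Proof. by case: hB => Bl _ _ _ _; have := Bl 1 x y z; rewrite s1 !mul1r. Qed.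

Lemma poisson_addr x y z : B x (y + z) = B x y + B x z.
Proof. by case: hB => _ Br _ _ _; have := Br 1 x y z; rewrite s1 !mul1r. Qed.

Lemma poisson_mull x y z : B (y * z) x = y * B z x + z * B y x.
Proof. by case: hB => _ _ _ _; apply. Qed.

Lemma poisson_anti x y : B x y = - B y x.
Proof.
case: hB => _ _ Balt _ _; have := Balt (x + y).
by rewrite poisson_addl !poisson_addr !Balt add0r addr0 => /eqP; rewrite addr_eq0 => /eqP.
Qed.

Lemma poisson_mulr x y z : B x (y * z) = y * B x z + z * B x y.
Proof.
by rewrite poisson_anti poisson_mull (poisson_anti z) (poisson_anti y) !mulrN opprD !opprK.
Qed.

Lemma derivation_poissonl w : derivation (B^~ w).
Proof. by split=> x y; rewrite ?poisson_addl ?poisson_mull. Qed.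

End PoissonBracket.

Lemma derivation_quot_rule (A : idomainType) (K : fieldType) (f : {rmorphism A -> K})
    (d : A -> A) (D : K -> K) :
  injective f -> derivation d -> (forall x, exists a b, b != 0 /\ x = f a / f b) ->
  (forall a b, b != 0 -> D (f a / f b) = (f (d a) * f b - f a * f (d b)) / f b ^+ 2) ->
  derivation D.
Proof.
move=> f_inj [dD dM] f_onto D_quot.
have fb_neq0 b : b != 0 -> f b != 0 by rewrite raddf_eq0.
split=> x y; have [a [b [b_neq0 ->]]] := f_onto x; have [c [e [e_neq0 ->]]] := f_onto y;
  have fb := fb_neq0 _ b_neq0; have fe := fb_neq0 _ e_neq0.
- have -> : f a / f b + f c / f e = f (a * e + c * b) / f (b * e).
    by rewrite rmorphD !rmorphM; field; rewrite fb fe.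
  rewrite !D_quot ?mulf_neq0 // dD !dM !(rmorphD, rmorphM).
  by field; rewrite fb fe.
- have -> : f a / f b * (f c / f e) = f (a * c) / f (b * e).
    by rewrite !rmorphM; field; rewrite fb fe.
  rewrite !D_quot ?mulf_neq0 // !dM !(rmorphD, rmorphM).
  by field; rewrite fb fe.
Qed.

Section FractionDerivation.
Variable A : idomainType.

Lemma tofrac_inj : injective (@FracField.tofrac A).
Proof. by move=> x y /eqP; rewrite tofrac_eq => /eqP. Qed.

Definition frac_num (x : {fraction A}) := (frac (repr x)).1.
Definition frac_den (x : {fraction A}) := (frac (repr x)).2.

Lemma frac_den_neq0 x : frac_den x != 0. Proof. exact: denom_ratioP. Qed.

Lemma frac_numden x : x = (frac_num x)%:F / (frac_den x)%:F.
Proof.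
have den_neq0 : (frac_den x)%:F != 0 by rewrite tofrac_eq0 frac_den_neq0.
apply: (mulIf den_neq0); rewrite divfK // /frac_num /frac_den.
have := reprK x; set r := repr x => {1}<-; unlock FracField.tofrac.
rewrite -[LHS]FracField.pi_mul; apply/eqmodP.
rewrite /= FracField.equivfE /FracField.mulf /=.
by rewrite !numden_Ratio ?mulr1 ?mulf_neq0 ?oner_neq0 ?denom_ratioP // mulrC.
Qed.

Lemma tofrac_quotient x : exists a b : A, b != 0 /\ x = a%:F / b%:F.
Proof.
by exists (frac_num x), (frac_den x); split; [exact: frac_den_neq0 | exact: frac_numden].
Qed.

Lemma derivation_frac_eq0 (D : {fraction A} -> {fraction A}) :
  derivation D -> (forall a, D a%:F = 0) -> forall x, D x = 0.
Proof.
move=> hD DA0 x; have [a [b [b_neq0 ->]]] := tofrac_quotient x.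
by rewrite (derivation_quot hD) ?tofrac_eq0 // !DA0 mulr0 mul0r subrr mul0r.
Qed.

Variable d : A -> A.
Hypothesis hd : derivation d.

(* The quotient rule on the representative chosen by [repr]; [frac_der_quot]
   shows that the choice does not matter. *)
Definition frac_der (x : {fraction A}) :=
  ((d (frac_num x))%:F * (frac_den x)%:F - (frac_num x)%:F * (d (frac_den x))%:F)
    / (frac_den x)%:F ^+ 2.

Lemma frac_der_quot a b : b != 0 ->
  frac_der (a%:F / b%:F) = ((d a)%:F * b%:F - a%:F * (d b)%:F) / b%:F ^+ 2.
Proof.
move=> b_neq0; rewrite /frac_der.
set x := a%:F / b%:F; set n := frac_num x; set m := frac_den x.
have m_neq0 : m != 0 by exact: frac_den_neq0.
have nb_am : n * b = a * m.
  apply: tofrac_inj; rewrite !tofracM; apply/eqP.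
  by rewrite -eqr_div ?tofrac_eq0 // -frac_numden.
have d_nb_am : n * d b + b * d n = a * d m + m * d a.
  by rewrite -!(derivationM hd) nb_am.
have cross : (d n * m - n * d m) * b ^+ 2 = (d a * b - a * d b) * m ^+ 2.
  apply/eqP; rewrite -subr_eq0; apply/eqP.
  transitivity (m * b * ((n * d b + b * d n) - (a * d m + m * d a))
                - (n * b - a * m) * (d m * b + d b * m)); first by ring.
  by rewrite d_nb_am nb_am !subrr mulr0 mul0r subrr.
apply/eqP; rewrite eqr_div ?expf_neq0 ?tofrac_eq0 //.
by rewrite -!tofracXn -!tofracM -!tofracB -!tofracM cross.
Qed.

Lemma frac_der_tofrac a : frac_der a%:F = (d a)%:F.
Proof.
rewrite -[a%:F]divr1 -tofrac1 frac_der_quot ?oner_neq0 // (derivation1 hd).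
by rewrite tofrac0 tofrac1 mulr0 subr0 mulr1 expr1n divr1.
Qed.

Lemma derivation_frac_der : derivation frac_der.
Proof.
apply: (derivation_quot_rule tofrac_inj hd tofrac_quotient) => a b b_neq0.
exact: frac_der_quot.
Qed.

End FractionDerivation.

Lemma frac_der_comm (A : idomainType) (D1 D2 : A -> A) :
  derivation D1 -> derivation D2 -> (forall x, D1 (D2 x) = D2 (D1 x)) ->
  forall x, frac_der D1 (frac_der D2 x) = frac_der D2 (frac_der D1 x).
Proof.
move=> h1 h2 D12 x; apply/eqP; rewrite -subr_eq0; apply/eqP; move: x.
apply: derivation_frac_eq0 => [|a].
  exact: derivation_commutator (derivation_frac_der h1) (derivation_frac_der h2).
by rewrite !frac_der_tofrac // D12 subrr.
Qed.

Lemma der_bracket_tofrac (A : idomainType) (D1 D2 : A -> A) :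
  derivation D1 -> derivation D2 -> forall f g,
  der_bracket (frac_der D1) (frac_der D2) f%:F g%:F = (der_bracket D1 D2 f g)%:F.
Proof. by move=> h1 h2 f g; rewrite /der_bracket !frac_der_tofrac // tofracB !tofracM. Qed.

Lemma poisson_frac_der_bracket (k : fieldType) (A : idomainType) (s : k -> A)
    (D1 D2 : A -> A) :
  derivation D1 -> derivation D2 -> (forall x, D1 (D2 x) = D2 (D1 x)) ->
  (forall c, D1 (s c) = 0) -> (forall c, D2 (s c) = 0) ->
  poisson_bracket (fun c => (s c)%:F) (der_bracket (frac_der D1) (frac_der D2)).
Proof.
move=> h1 h2 D12 D1s D2s.
apply: poisson_der_bracket.
- exact: derivation_frac_der.
- exact: derivation_frac_der.
- exact: frac_der_comm.
- by move=> c; rewrite frac_der_tofrac // D1s tofrac0.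
- by move=> c; rewrite frac_der_tofrac // D2s tofrac0.
Qed.

Section PoissonCentreFraction.
Variables (k : fieldType) (A : idomainType) (s : k -> {fraction A}).
Variable B : {fraction A} -> {fraction A} -> {fraction A}.
Hypotheses (s1 : s 1 = 1) (hB : poisson_bracket s B).

Lemma poisson_central_tofrac z : (forall u : A, B z u%:F = 0) -> forall w, B z w = 0.
Proof.
move=> zA0 w; have [u [v [v_neq0 ->]]] := tofrac_quotient w.
have vF_neq0 : v%:F != 0 by rewrite tofrac_eq0.
have := zA0 u; rewrite -{1}[u%:F](divfK vF_neq0) (poisson_mulr s1 hB) zA0 mulr0 add0r.
by move/eqP; rewrite mulf_eq0 (negbTE vF_neq0) => /eqP.
Qed.

Lemma poisson_central_quotE p q : q != 0 ->
  (forall w, B (p%:F / q%:F) w = 0) <->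
  (forall u : A, q%:F * B p%:F u%:F = p%:F * B q%:F u%:F).
Proof.
move=> q_neq0; have qF_neq0 : q%:F != 0 by rewrite tofrac_eq0.
have quot u : B (p%:F / q%:F) u%:F
    = (B p%:F u%:F * q%:F - p%:F * B q%:F u%:F) / q%:F ^+ 2.
  exact: derivation_quot (derivation_poissonl s1 hB u%:F) _ _ qF_neq0.
split=> [central u | cross].
- have := central u%:F; rewrite quot => /eqP.
  rewrite mulf_eq0 invr_eq0 expf_eq0 (negbTE qF_neq0) andbF orbF subr_eq0.
  by rewrite mulrC => /eqP.
- by apply: poisson_central_tofrac => u; rewrite quot [_ * q%:F]mulrC cross subrr mul0r.
Qed.

End PoissonCentreFraction.

Section CharZeroWronskian.
Variable R : idomainType.
Hypothesis natr_eq0 : forall n, (n%:R == 0 :> R) = (n == 0)%N.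

Lemma natmul_inj (x : R) : x != 0 -> injective (GRing.natmul x).
Proof.
move=> x_neq0 m n; rewrite -[x *+ m]mulr_natr -[x *+ n]mulr_natr => /(mulfI x_neq0).
wlog le_mn : m n / (m <= n)%N => [hw|].
  by case/orP: (leq_total m n) => le eq_mn; [exact: hw | exact/esym/(hw _ _ le)/esym].
move=> eq_mn; apply/eqP; rewrite eqn_leq le_mn /= -subn_eq0 -natr_eq0.
by rewrite natrB // eq_mn subrr.
Qed.

Lemma lead_coef_deriv (p : {poly R}) : lead_coef p^`() = lead_coef p *+ (size p).-1.
Proof.
rewrite /deriv; have [->|n_gt0] := posnP (size p).-1.
  by rewrite poly_def big_ord0 lead_coef0 mulr0n.
have lead_neq0 : lead_coef p != 0.
  by rewrite lead_coef_eq0; apply: contraTneq n_gt0 => ->; rewrite size_poly0.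
rewrite lead_coef_poly // (prednK n_gt0) //.
by apply: contraTneq n_gt0; rewrite -(mulr0n (lead_coef p)) => /(natmul_inj lead_neq0) ->.
Qed.

Lemma wronskian_size (p q : {poly R}) : p != 0 -> q != 0 ->
  q * p^`() = p * q^`() -> size p = size q.
Proof.
move=> p_neq0 q_neq0 /(congr1 lead_coef); rewrite !lead_coefM !lead_coef_deriv.
rewrite !mulrnAr [lead_coef p * _]mulrC => /natmul_inj size_eq.
have [sp sq] : (0 < size p)%N /\ (0 < size q)%N by rewrite !size_poly_gt0.
by rewrite -(prednK sp) -(prednK sq) size_eq // mulf_neq0 ?lead_coef_eq0.
Qed.

Lemma wronskian0_proportional (p q : {poly R}) : q != 0 ->
  q * p^`() = p * q^`() -> lead_coef q *: p = lead_coef p *: q.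
Proof.
move=> q_neq0 wpq; have [->|p_neq0] := eqVneq p 0.
  by rewrite lead_coef0 scale0r scaler0.
pose r := lead_coef q *: p - lead_coef p *: q.
have wrq : q * r^`() = r * q^`().
  rewrite /r derivB !derivZ mulrBr mulrBl -!scalerAr -!scalerAl wpq.
  by rewrite [q * q^`()]mulrC.
apply/eqP; rewrite -subr_eq0 -/r; apply: contraT => r_neq0.
have size_pq := wronskian_size p_neq0 q_neq0 wpq.
have : r`_(size q).-1 = 0.
  by rewrite /r coefB !coefZ -size_pq -!lead_coefE size_pq -lead_coefE mulrC subrr.
rewrite -(wronskian_size r_neq0 q_neq0 wrq) -lead_coefE => /eqP.
by rewrite lead_coef_eq0 (negbTE r_neq0).
Qed.

End CharZeroWronskian.

Lemma derivation_deriv (R : comNzRingType) : derivation (@deriv R).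
Proof. by split=> p q; rewrite ?derivD // derivM addrC [p^`() * q]mulrC. Qed.

Section CoefficientDerivation.
Variables (R : idomainType) (delta : R -> R).
Hypothesis hd : derivation delta.

Lemma derivation_map_poly : derivation (map_poly delta).
Proof.
have coefd p i : (map_poly delta p)`_i = delta p`_i.
  exact: coef_map_id0 (derivation0 hd).
split=> p q; apply/polyP => i.
  by rewrite coefD !coefd coefD (derivationD hd).
rewrite coefD coefd coefM (derivation_sum hd) coefM coefMr -big_split /=.
by apply: eq_bigr => j _; rewrite (derivationM hd) !coefd.
Qed.

Lemma deriv_map_derivation p : (map_poly delta p)^`() = map_poly delta p^`().
Proof.
apply/polyP => i; rewrite coef_deriv !coef_map_id0 ?(derivation0 hd) //.
by rewrite coef_deriv (derivationMn hd).
Qed.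

Lemma map_poly_derivationC c : map_poly delta c%:P = (delta c)%:P.
Proof.
apply/polyP => i; rewrite coef_map_id0 ?(derivation0 hd) // !coefC.
by case: (i == 0)%N; rewrite ?(derivation0 hd).
Qed.

Local Notation Bt := (der_bracket (@deriv R) (map_poly delta)).

Lemma der_bracket_polyCr p c : Bt p c%:P = p^`() * (delta c)%:P.
Proof. by rewrite /der_bracket map_poly_derivationC derivC mulr0 subr0. Qed.

Lemma der_bracket_polyCl c u : Bt c%:P u = - ((delta c)%:P * u^`()).
Proof. by rewrite /der_bracket map_poly_derivationC derivC mul0r sub0r. Qed.

End CoefficientDerivation.

Lemma least_counterexample (Q : nat -> Prop) :
  ~ (forall i, Q i) -> exists i, ~ Q i /\ forall l, (l < i)%N -> Q l.
Proof.
move=> notQ; apply: NNPP => no_least; apply: notQ => i.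
suff Q_below : forall n l, (l < n)%N -> Q l by exact: Q_below i.+1 i (ltnSn i).
elim=> [|n IHn] l //; rewrite ltnS leq_eqVlt => /orP[/eqP-> | /IHn //].
by apply: NNPP => notQn; apply: no_least; exists n.
Qed.

Section ExtensionIdeal.
Variables (R : idomainType) (P : R -> Prop).
Hypothesis hP : prime_ideal P.

Lemma ideal0 : P 0. Proof. by case: hP. Qed.
Lemma idealD x y : P x -> P y -> P (x + y). Proof. by case: hP => _ + _ _ _; apply. Qed.
Lemma idealMl a x : P x -> P (a * x). Proof. by case: hP => _ _ + _ _; apply. Qed.
Lemma idealMr a x : P x -> P (x * a). Proof. by rewrite mulrC; apply: idealMl. Qed.
Lemma idealB x y : P x -> P y -> P (x - y).
Proof. by move=> Px Py; rewrite -mulN1r; apply/idealD/idealMl. Qed.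
Lemma idealMn x n : P x -> P (x *+ n). Proof. by rewrite -mulr_natl; apply: idealMl. Qed.
Lemma ideal_sum (I : Type) (r : seq I) (Pr : pred I) (F : I -> R) :
  (forall i, Pr i -> P (F i)) -> P (\sum_(i <- r | Pr i) F i).
Proof. by move=> PF; apply: big_ind => //; [exact: ideal0 | exact: idealD]. Qed.

Definition coefs_in (f : {poly R}) := forall i, P f`_i.

Lemma ext_idealE f : ext_ideal P f <-> coefs_in f.
Proof.
split=> [[s [Ps ->]] i | Pf].
  by rewrite coef_sum big_seq; apply: ideal_sum => u su; rewrite coefMC; exact/idealMl/Ps.
exists [seq ('X^i, f`_i) | i <- index_iota 0 (size f)]; split.
  by move=> u /mapP[i _ ->]; apply: Pf.
rewrite big_map big_mkord /= -[LHS]coefK poly_def.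
by apply: eq_bigr => i _; rewrite mulrC mul_polyC.
Qed.

Lemma coefs_inMl g f : coefs_in f -> coefs_in (g * f).
Proof. by move=> Pf i; rewrite coefM; apply: ideal_sum => j _; apply: idealMl. Qed.

Lemma coefs_inMr g f : coefs_in f -> coefs_in (f * g).
Proof. by rewrite mulrC; apply: coefs_inMl. Qed.

Lemma coefs_inB f g : coefs_in f -> coefs_in g -> coefs_in (f - g).
Proof. by move=> Pf Pg i; rewrite coefB; apply: idealB. Qed.

(* If f_i and g_j are the first coefficients outside P, every other term of
   (f * g)_(i + j) lies in P, hence so would f_i * g_j. *)
Lemma coefs_in_primeM f g : coefs_in (f * g) -> coefs_in f \/ coefs_in g.
Proof.
move=> Pfg; apply: NNPP => /not_or_and[/least_counterexample[i [Pfi Pf_lt]]].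
move=> /least_counterexample[j [Pgj Pg_lt]].
have i_lt : (i < (i + j).+1)%N by rewrite ltnS leq_addr.
have := Pfg (i + j); rewrite coefM (bigD1 (Ordinal i_lt)) //= addKn => Psum.
set S := \sum_(_ < _ | _) _ in Psum.
have PS : P S.
  apply: ideal_sum => l /= l_neq_i; have [l_lt_i|i_le_l] := ltnP l i.
    exact/idealMr/Pf_lt.
  apply/idealMl/Pg_lt; have i_lt_l : (i < l)%N.
    rewrite ltn_neqAle i_le_l andbT eq_sym.
    by apply: contra l_neq_i => /eqP ?; apply/eqP/val_inj.
  by have := ltn_ord l; rewrite ltnS -[(i + j)%R]/(i + j)%N; lia.
have Pfg_ij : P (f`_i * g`_j) by have := idealB Psum PS; rewrite addrK.
by case: hP => _ _ _ _ /(_ _ _ Pfg_ij) [].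
Qed.

Lemma prime_ext_ideal : prime_ideal (ext_ideal P).
Proof.
split=> [|f g|g f|/ext_idealE|f g].
- by apply/ext_idealE => i; rewrite coef0; exact: ideal0.
- by move=> /ext_idealE Pf /ext_idealE Pg; apply/ext_idealE => i; rewrite coefD; apply: idealD.
- by move=> /ext_idealE Pf; apply/ext_idealE; apply: coefs_inMl.
- by move/(_ 0%N); rewrite coef1; case: hP.
- by move=> /ext_idealE /coefs_in_primeM[] /ext_idealE; [left | right].
Qed.

Variable delta : R -> R.
Hypotheses (hd : derivation delta) (P_delta : forall x, P x -> P (delta x)).

Lemma poisson_prime_ext_ideal :
  poisson_prime_ideal (der_bracket (@deriv R) (map_poly delta)) (ext_ideal P).
Proof.
split=> [|f g /ext_idealE Pf]; first exact: prime_ext_ideal.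
apply/ext_idealE/coefs_inB; apply: coefs_inMr => i.
  by rewrite coef_deriv; apply: idealMn.
by rewrite coef_map_id0 ?(derivation0 hd) //; apply: P_delta.
Qed.

End ExtensionIdeal.

Section PoissonCentre.
Variables (k : fieldType) (R : idomainType) (delta : R -> R).
Hypotheses (hd : derivation delta) (natr_eq0 : forall n, (n%:R == 0 :> R) = (n == 0)%N).
Variable a0 : R.
Hypothesis delta_a0 : delta a0 != 0.

Local Notation Bt := (der_bracket (@deriv R) (map_poly delta)).

Variable s : k -> {fraction {poly R}}.
Variable B : {fraction {poly R}} -> {fraction {poly R}} -> {fraction {poly R}}.
Hypotheses (s1 : s 1 = 1) (hB : poisson_bracket s B).
Hypothesis B_tofrac : forall f g, B f%:F g%:F = (Bt f g)%:F.
Variable delta' : {fraction R} -> {fraction R}.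
Hypotheses (hdelta' : derivation delta') (delta'_tofrac : forall a, delta' a%:F = (delta a)%:F).

Local Notation central z := (forall w, B z w = 0).

Lemma central_quotE (p q : {poly R}) : q != 0 ->
  central (p%:F / q%:F) <-> forall u, q * Bt p u = p * Bt q u.
Proof.
move=> q_neq0; split=> [/(poisson_central_quotE s1 hB _ q_neq0) cross u | cross].
  by apply: tofrac_inj; rewrite !tofracM -!B_tofrac cross.
by apply/(poisson_central_quotE s1 hB _ q_neq0) => u; rewrite !B_tofrac -!tofracM cross.
Qed.

Lemma central_wronskian (p q : {poly R}) : q != 0 ->
  central (p%:F / q%:F) -> q * p^`() = p * q^`().
Proof.
move=> q_neq0 /(central_quotE _ q_neq0)/(_ a0%:P).
rewrite !der_bracket_polyCr // !mulrA; apply: mulIf.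
by rewrite polyC_eq0.
Qed.

Lemma central_ratioE (a b : R) : b != 0 ->
  central ((a%:P)%:F / (b%:P)%:F) <-> b * delta a = a * delta b.
Proof.
move=> b_neq0; have bP_neq0 : b%:P != 0 by rewrite polyC_eq0.
split=> [/(central_quotE _ bP_neq0)/(_ 'X) | ratio].
  rewrite !der_bracket_polyCl // derivX !mulr1 !mulrN -!polyCM.
  by move/oppr_inj/polyC_inj.
apply/(central_quotE _ bP_neq0) => u.
by rewrite !der_bracket_polyCl // !mulrN !mulrA -!polyCM ratio.
Qed.

Lemma delta'_ratio_eq0 (a b : R) : b != 0 ->
  delta' (a%:F / b%:F) = 0 <-> b * delta a = a * delta b.
Proof.
move=> b_neq0; have bF_neq0 : b%:F != 0 by rewrite tofrac_eq0.
rewrite (derivation_quot hdelta') // !delta'_tofrac -!tofracM -tofracB.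
split=> [/eqP | ratio]; last by rewrite [delta a * b]mulrC ratio subrr tofrac0 mul0r.
rewrite mulf_eq0 invr_eq0 expf_eq0 (negbTE bF_neq0) andbF orbF tofrac_eq0 subr_eq0.
by rewrite mulrC => /eqP.
Qed.

Lemma poisson_centre_ratio z : central z <->
  exists a b : R, [/\ b != 0, delta' (a%:F / b%:F) = 0 & z = (a%:P)%:F / (b%:P)%:F].
Proof.
split=> [z_central | [a [b [b_neq0 /(delta'_ratio_eq0 _ b_neq0) ratio ->]]]]; last first.
  exact/central_ratioE.
have [p [q [q_neq0 z_pq]]] := tofrac_quotient z.
have wpq : q * p^`() = p * q^`() by apply: central_wronskian; rewrite // -z_pq.
have := wronskian0_proportional natr_eq0 q_neq0 wpq.
set a := lead_coef p; set b := lead_coef q => scale_pq.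
have b_neq0 : b != 0 by rewrite lead_coef_eq0.
have z_ab : z = (a%:P)%:F / (b%:P)%:F.
  rewrite z_pq; apply/eqP; rewrite eqr_div ?tofrac_eq0 ?polyC_eq0 // -!tofracM tofrac_eq.
  by rewrite mulrC !mul_polyC scale_pq.
exists a, b; split=> //; apply/(delta'_ratio_eq0 _ b_neq0)/(central_ratioE _ b_neq0).
by rewrite -z_ab.
Qed.

End PoissonCentre.

Theorem proposition5p2 (k : fieldType) (R : idomainType)
    (iota : {rmorphism k -> R}) (delta : R -> R) :
  [pchar k] =i pred0 ->
  klin_derivation iota delta ->
  (exists x, delta x != 0) ->
  exists B : {poly R} -> {poly R} -> {poly R},
    [/\ poisson_bracket (fun c => (iota c)%:P) B,
        (* the bracket extends to Frac(R[t]) *)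
        (exists B' : {fraction {poly R}} -> {fraction {poly R}} -> {fraction {poly R}},
           poisson_bracket (fun c => ((iota c)%:P)%:F) B' /\
           forall f g, B' f%:F g%:F = (B f g)%:F),
        (* (1) Poisson centre of Frac(R[t]) = constants of (Frac(R), delta),
           Frac(R) being embedded by a/b |-> a/b *)
        (forall (B' : {fraction {poly R}} -> {fraction {poly R}} -> {fraction {poly R}})
                (delta' : {fraction R} -> {fraction R}),
           poisson_bracket (fun c => ((iota c)%:P)%:F) B' ->
           (forall f g, B' f%:F g%:F = (B f g)%:F) ->
           derivation delta' ->
           (forall a, delta' a%:F = (delta a)%:F) ->
           forall z : {fraction {poly R}},
             (forall w, B' z w = 0) <->
             (exists a b : R, [/\ b != 0, delta' (a%:F / b%:F) = 0 &
                                  z = (a%:P)%:F / (b%:P)%:F])) &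
        (* (2) prime differential ideals extend to Poisson prime ideals *)
        (forall P : R -> Prop, prime_ideal P -> (forall x, P x -> P (delta x)) ->
           poisson_prime_ideal B (ext_ideal P))].
Proof.
move=> char0 [delta_lin delta_mul] [a0 delta_a0].
have hd : derivation delta.
  split=> [x y|]; last exact: delta_mul.
  by have := delta_lin 1 x y; rewrite rmorph1 !mul1r.
have delta_iota c : delta (iota c) = 0.
  have := delta_lin c 1 0.
  by rewrite mulr1 addr0 (derivation1 hd) (derivation0 hd) mulr0 addr0.
have natr_eq0 n : (n%:R == 0 :> R) = (n == 0)%N.
  by rewrite -(rmorph_nat iota) fmorph_eq0 (pcharf0P _).1.
have hDt := derivation_deriv R.
have hDd := derivation_map_poly hd.
have DtDd := deriv_map_derivation hd.
have Dt_iota c : ((iota c)%:P)^`() = 0 := derivC _.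
have Dd_iota c : map_poly delta (iota c)%:P = 0.
  by rewrite map_poly_derivationC // delta_iota.
exists (der_bracket (@deriv R) (map_poly delta)); split.
- exact: poisson_der_bracket.
- exists (der_bracket (frac_der (@deriv R)) (frac_der (map_poly delta))).
  by split; [exact: poisson_frac_der_bracket | exact: der_bracket_tofrac].
- move=> B' delta' hB' B'_tofrac hdelta' delta'_tofrac z.
  have s1 : ((iota 1)%:P)%:F = 1 :> {fraction {poly R}}.
    by rewrite rmorph1 polyC1 tofrac1.
  exact: (poisson_centre_ratio hd natr_eq0 delta_a0 s1 hB' B'_tofrac hdelta' delta'_tofrac).
- by move=> P hP; exact: poisson_prime_ext_ideal.
Qed.
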